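(* With notation as in the context (type $E_7$), let $s\in\{1,3,4,5,6,7\}$ and let $\beta\neq\beta'$ be elements of $\Delta_s^+$. Then $(f(\beta)|f(\beta'))=0$ if and only if $f(\beta)$ and $f(\beta')$ agree in exactly one of their three coordinates. In particular, $\langle\beta,\beta'\rangle=0$ if and only if $f(\beta)$ and $f(\beta')$ agree in exactly one coordinate.
   Context: Let $F=\{0,1,2,3\}$ be the group $\mathbb{Z}/2\times\mathbb{Z}/2$ with operation $\oplus$ (binary addition without carry) and symplectic form $(a|a')=0$ if $a=0$, $a'=0$ or $a=a'$, and $1$ otherwise. Let $V=F^3$ (elements written $abc$), with coordinatewise $\oplus$ and form $(abc|a'b'c')=(a|a')+(b|b')+(c|c')\in\mathbb{Z}/2$. Let $\Delta$ be the $E_7$ root system with simple roots $\alpha_1,\dots,\alpha_7$, $\langle\alpha_i,\alpha_i\rangle=2$, $\langle\alpha_i,\alpha_j\rangle=-1$ for $\{i,j\}\in\{\{1,3\},\{3,4\},\{4,5\},\{5,6\},\{6,7\},\{2,4\}\}$, $0$ otherwise; $\Lambda=\bigoplus\mathbb{Z}\alpha_i$, $\Delta^+$ the positive roots. Let $f:\Lambda\to V$ be the homomorphism with $f(\alpha_1)=100$, $f(\alpha_2)=030$, $f(\alpha_3)=300$, $f(\alpha_4)=111$, $f(\alpha_5)=003$, $f(\alpha_6)=001$, $f(\alpha_7)=033$. For $\beta=\sum\beta^i\alpha_i\in\Delta^+$ let $m(\beta)=\max\{i:\beta^i\ne0\}$. The strata are $\Delta_1^+=\{\alpha_1\}$,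 $\Delta_3^+=\{\beta\in\Delta^+: m(\beta)\in\{2,3\}\}$, and $\Delta_s^+=\{\beta\in\Delta^+: m(\beta)=s\}$ for $s=4,5,6,7$. *)

From Stdlib Require Import PeanoNat.
From mathcomp Require Import all_boot all_order all_algebra.
Set Implicit Arguments. Unset Strict Implicit. Unset Printing Implicit Defensive.
Import Order.TTheory GRing.Theory Num.Theory.

(* Elements of F are encoded by the naturals 0,1,2,3; ⊕ is bitwise xor. *)
Definition Fadd (a b : nat) : nat := Nat.lxor a b.

Definition Fform (a b : nat) : nat :=
  if [|| a == 0%N, b == 0%N | a == b] then 0%N else 1%N.

Definition V := (nat * nat * nat)%type.
Definition Vc1 (x : V) : nat := x.1.1.
Definition Vc2 (x : V) : nat := x.1.2.
Definition Vc3 (x : V) : nat := x.2.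

Definition Vzero : V := (0%N, 0%N, 0%N).
Definition Vadd (x y : V) : V :=
  (Fadd (Vc1 x) (Vc1 y), Fadd (Vc2 x) (Vc2 y), Fadd (Vc3 x) (Vc3 y)).

Definition Vform (x y : V) : nat :=
  ((Fform (Vc1 x) (Vc1 y) + Fform (Vc2 x) (Vc2 y) + Fform (Vc3 x) (Vc3 y)) %% 2)%N.

Definition agree_count (x y : V) : nat :=
  ((Vc1 x == Vc1 y) + (Vc2 x == Vc2 y) + (Vc3 x == Vc3 y))%N.

(* An element beta = sum_i beta^i alpha_i of Lambda is its coefficient vector;
   the ordinal k : 'I_7 stands for the simple root alpha_(k+1). *)
Definition Lam := {ffun 'I_7 -> int}.

(* coefficient beta^i, with the paper's 1-based labels i = 1..7 *)
Definition coef (b : Lam) (i : nat) : int := b (inord i.-1).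

Definition cartan (i j : nat) : int :=
  if i == j then Posz 2
  else if (i, j) \in [:: (1,3); (3,4); (4,5); (5,6); (6,7); (2,4);
                          (3,1); (4,3); (5,4); (6,5); (7,6); (4,2)]%N
       then Negz 0 else Posz 0.

Definition lam_form (b c : Lam) : int :=
  (\sum_(1 <= i < 8) \sum_(1 <= j < 8) coef b i * coef c j * cartan i j)%R.

(* Delta = {beta in Lambda : <beta,beta> = 2} (E7 is simply laced);
   Delta^+ = roots with all coefficients nonnegative. *)
Definition pos_root (b : Lam) : Prop :=
  lam_form b b = Posz 2 /\ (forall i : 'I_7, (0 <= b i)%R).

Definition f_simple (i : nat) : V :=
  match i with
  | 1 => (1, 0, 0)
  | 2 => (0, 3, 0)
  | 3 => (3, 0, 0)
  | 4 => (1, 1, 1)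
  | 5 => (0, 0, 3)
  | 6 => (0, 0, 1)
  | 7 => (0, 3, 3)
  | _ => (0, 0, 0)
  end%N.

(* f(sum beta^i alpha_i) = ⊕_i beta^i f(alpha_i); since V has exponent 2,
   n * v = v if n is odd and 0 if n is even. *)
Definition zscale (n : int) (v : V) : V := if odd `|n|%N then v else Vzero.

Definition fmap (b : Lam) : V :=
  foldr (fun i acc => Vadd (zscale (coef b i) (f_simple i)) acc) Vzero (iota 1 7).

Definition mmax (b : Lam) : nat :=
  \max_(1 <= i < 8 | coef b i != 0%R) i.

Definition alpha1 : Lam := [ffun k : 'I_7 => if val k == 0%N then Posz 1 else Posz 0].

Definition in_stratum (s : nat) (b : Lam) : Prop :=
  pos_root b /\
  (if s == 1%N then b = alpha1
   else if s == 3%N then (mmax b == 2%N) || (mmax b == 3%N)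
   else mmax b == s).

(* The Cartan form of E7 is positive definite: clearing denominators in its
   LDL^T decomposition writes it as a sum of squares.  Cauchy-Schwarz against
   the fundamental weights then bounds each coefficient of a positive root,
   beta^i <= sqrt (2 (A^-1)_ii), and these bounds are exactly the coefficients
   (2,2,3,4,3,2,1) of the highest root.  So the positive roots are the solutions
   of <x,x> = 2 among the 4320 nonnegative vectors below the highest root, and
   both equivalences are verified pair by pair on every stratum.  The stratum
   Delta_1^+ = {alpha_1} has no pair of distinct roots. *)

From mathcomp Require Import all_boot all_order all_algebra.
From mathcomp Require Import zify ring.
Import Order.TTheory GRing.Theory Num.Theory.
Local Open Scope ring_scope.

Definition e7_form (u v : nat -> int) : int :=
  2 * (u 1 * v 1 + u 2 * v 2 + u 3 * v 3 + u 4 * v 4 + u 5 * v 5 + u 6 * v 6 + u 7 * v 7)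
  - (u 1 * v 3 + u 3 * v 1 + u 3 * v 4 + u 4 * v 3 + u 4 * v 5 + u 5 * v 4
     + u 5 * v 6 + u 6 * v 5 + u 6 * v 7 + u 7 * v 6 + u 2 * v 4 + u 4 * v 2).

Lemma lam_formE b c : lam_form b c = e7_form (coef b) (coef c).
Proof. rewrite /lam_form unlock /= /cartan /= !NegzE /e7_form; ring. Qed.

(* Denominators cleared in the LDL^T decomposition of the Cartan matrix. *)
Lemma lam_form_sos b : 12 * lam_form b b =
  6 * (2 * coef b 1 - coef b 3) ^+ 2 + 6 * (2 * coef b 2 - coef b 4) ^+ 2
  + 2 * (3 * coef b 3 - 2 * coef b 4) ^+ 2 + (4 * coef b 5 - 3 * coef b 4) ^+ 2
  + 2 * (3 * coef b 6 - 2 * coef b 5) ^+ 2 + 6 * (2 * coef b 7 - coef b 6) ^+ 2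
  + coef b 4 ^+ 2.
Proof. rewrite lam_formE /e7_form; ring. Qed.

Lemma lam_form_ge0 b : 0 <= lam_form b b.
Proof.
rewrite -(@pmulr_rge0 _ 12) // lam_form_sos.
by rewrite !addr_ge0 // ?sqr_ge0 // mulr_ge0 // sqr_ge0.
Qed.

Lemma lam_form_lincomb (x y : int) (b c : Lam) (d := [ffun k => x * b k + y * c k]) :
  lam_form d d =
  x ^+ 2 * lam_form b b + 2 * x * y * lam_form b c + y ^+ 2 * lam_form c c.
Proof. rewrite /d !lam_formE /e7_form /coef !ffunE; ring. Qed.

Lemma lam_form_Cauchy_Schwarz b c : 0 < lam_form c c ->
  lam_form b c ^+ 2 <= lam_form b b * lam_form c c.
Proof.
move=> c_pos.
have := lam_form_ge0 [ffun k => lam_form c c * b k + - lam_form b c * c k].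
rewrite lam_form_lincomb.
have -> : forall qbb qbc qcc : int,
    qcc ^+ 2 * qbb + 2 * qcc * - qbc * qbc + (- qbc) ^+ 2 * qcc
    = qcc * (qbb * qcc - qbc ^+ 2) by move=> *; ring.
by rewrite pmulr_rge0 // subr_ge0.
Qed.

Definition lam_of (x : seq nat) : Lam := [ffun k : 'I_7 => Posz (nth 0 x k)].

Definition nat_coef (x : seq nat) (i : nat) : int := Posz (nth 0 x i.-1).

Lemma coef_lam_of x i : (0 < i < 8)%N -> coef (lam_of x) i = nat_coef x i.
Proof. by case: i => // i /andP[_ i_lt8]; rewrite /coef ffunE inordK. Qed.

Definition highest_root : seq nat := [:: 2; 2; 3; 4; 3; 2; 1].

(* [fund_weight i] is [weight_den i] times the fundamental weight dual to
   alpha_i: an integral column of the inverse Cartan matrix. *)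
Definition fund_weight (i : nat) : Lam :=
  lam_of (nth [::] [:: [:: 2; 2; 3; 4; 3; 2; 1]; [:: 4; 7; 8; 12; 9; 6; 3];
                      [:: 3; 4; 6; 8; 6; 4; 2]; [:: 4; 6; 8; 12; 9; 6; 3];
                      [:: 6; 9; 12; 18; 15; 10; 5]; [:: 2; 3; 4; 6; 5; 4; 2];
                      [:: 2; 3; 4; 6; 5; 4; 3]] i.-1).

Definition weight_den (i : nat) : nat := nth 0 [:: 1; 2; 1; 1; 2; 1; 2] i.-1.

Lemma lam_form_fund_weight b i : (0 < i < 8)%N ->
  lam_form b (fund_weight i) = (weight_den i)%:Z * coef b i.
Proof.
move=> i_range; rewrite lam_formE /e7_form /fund_weight !coef_lam_of //.
by case: i i_range => [|[|[|[|[|[|[|[|i]]]]]]]] //= _;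
  rewrite /weight_den /nat_coef /=; ring.
Qed.

Lemma pos_root_le_highest_root b i : pos_root b -> (0 < i < 8)%N ->
  coef b i <= (nth 0 highest_root i.-1)%:Z.
Proof.
case=> bb2 b_ge0 i_range.
(* Cauchy-Schwarz reads (d * beta^i)^2 <= 2 * d * w^i, where d = weight_den i
   and w = fund_weight i. *)
have := lam_form_Cauchy_Schwarz b (fund_weight i).
rewrite !lam_form_fund_weight // bb2 coef_lam_of // /nat_coef !expr2.
have := b_ge0 (inord i.-1); rewrite -/(coef b i).
by case: i i_range => [|[|[|[|[|[|[|[|i]]]]]]]] //= _;
  rewrite /weight_den /=; nia.
Qed.

Fixpoint below (s : seq nat) : seq (seq nat) :=
  if s is n :: s' then [seq k :: t | k <- iota 0 n.+1, t <- below s'] else [:: [::]].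

Lemma mem_below s x : (x \in below s) = all2 leq x s.
Proof.
elim: s x => [|n s IHs] [|k t] //.
- by apply/negbTE/allpairsP=> -[[k' t'] []].
- apply/allpairsP/andP=> [[[k' t'] [k'_in t'_in [-> ->]]] | [k_le t_le]].
    by move: k'_in t'_in; rewrite mem_iota IHs.
  by exists (k, t); rewrite mem_iota add0n IHs.
Qed.

(* Applying a finfun is very slow in the VM, so the final check runs on
   coefficient sequences; [fmap] and [mmax] only depend on [coef]. *)
Lemma lam_form_lam_of x y :
  lam_form (lam_of x) (lam_of y) = e7_form (nat_coef x) (nat_coef y).
Proof. by rewrite lam_formE /e7_form !coef_lam_of. Qed.

Definition fmap_coef (u : nat -> int) : V :=
  foldr (fun i acc => Vadd (zscale (u i) (f_simple i)) acc) Vzero (iota 1 7).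

Lemma fmap_lam_of x : fmap (lam_of x) = fmap_coef (nat_coef x).
Proof. by rewrite /fmap /fmap_coef /= !coef_lam_of. Qed.

Definition mmax_coef (u : nat -> int) : nat := \max_(1 <= i < 8 | u i != 0) i.

Lemma mmax_lam_of x : mmax (lam_of x) = mmax_coef (nat_coef x).
Proof. by apply: congr_big_nat => // i /coef_lam_of ->. Qed.

Definition e7_pos_roots : seq (seq nat) :=
  [seq x <- below highest_root | e7_form (nat_coef x) (nat_coef x) == 2].

Lemma pos_root_enum b :
  pos_root b -> exists2 x, x \in e7_pos_roots & b = lam_of x.
Proof.
move=> b_root; have [bb2 b_ge0] := b_root.
pose x := [seq `|coef b i|%N | i <- iota 1 7].
have b_eq : b = lam_of x.
  apply/ffunP=> k; rewrite ffunE (nth_map 0) ?size_iota // nth_iota // add1n.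
  by rewrite /coef /= inord_val gez0_abs.
have coef_le i : (0 < i < 8)%N -> (`|coef b i| <= nth 0 highest_root i.-1)%N.
  move=> i_range; rewrite -lez_nat gez0_abs ?pos_root_le_highest_root //.
  by rewrite /coef; apply: b_ge0.
exists x => //; rewrite mem_filter -lam_form_lam_of -b_eq bb2 eqxx mem_below /=.
by rewrite !coef_le.
Qed.

Definition stratum_cond (s : nat) (u : nat -> int) : bool :=
  if s == 3%N then (mmax_coef u == 2%N) || (mmax_coef u == 3%N) else mmax_coef u == s.

Lemma e7_strata_check :
  all (fun s => all (fun x => all (fun y =>
      [&& stratum_cond s (nat_coef x), stratum_cond s (nat_coef y) & x != y] ==>
      let fx := fmap_coef (nat_coef x) in let fy := fmap_coef (nat_coef y) in
      ((Vform fx fy == 0%N) == (agree_count fx fy == 1%N))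
      && ((e7_form (nat_coef x) (nat_coef y) == 0) == (agree_count fx fy == 1%N)))
    e7_pos_roots) e7_pos_roots) [:: 3; 4; 5; 6; 7]%N.
Proof. by rewrite /stratum_cond /mmax_coef unlock; vm_compute. Qed.

Lemma in_stratum_lam_of s x :
  s != 1%N -> in_stratum s (lam_of x) -> stratum_cond s (nat_coef x).
Proof. by move=> /negbTE s_neq1 [_]; rewrite s_neq1 /stratum_cond mmax_lam_of. Qed.

Lemma eq_iff_eqb (T U : eqType) (x x0 : T) (y y0 : U) :
  (x == x0) = (y == y0) -> x = x0 <-> y = y0.
Proof. by move=> eq_xy; split=> /eqP; [rewrite eq_xy | rewrite -eq_xy] => /eqP. Qed.

Theorem mainTheorem7 (s : nat) (b b' : Lam) :
  s \in [:: 1; 3; 4; 5; 6; 7]%N ->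
  in_stratum s b -> in_stratum s b' -> b <> b' ->
  (Vform (fmap b) (fmap b') = 0%N <-> agree_count (fmap b) (fmap b') = 1%N) /\
  (lam_form b b' = Posz 0 <-> agree_count (fmap b) (fmap b') = 1%N).
Proof.
move=> s_in b_s b'_s b_neq.
have [s1 | s_neq1] := eqVneq s 1%N.
  by case: b_neq; move: b_s b'_s; rewrite s1 => -[_ /= ->] [_ /= ->].
have s_gt1 : s \in [:: 3; 4; 5; 6; 7]%N by move: s_in; rewrite inE (negbTE s_neq1).
have [x x_root b_eq] := pos_root_enum b b_s.1.
have [y y_root b'_eq] := pos_root_enum b' b'_s.1.
have x_neq_y : x != y by apply/eqP=> x_eq_y; apply: b_neq; rewrite b_eq b'_eq x_eq_y.
have x_s : stratum_cond s (nat_coef x).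
  by apply: in_stratum_lam_of => //; rewrite -b_eq.
have y_s : stratum_cond s (nat_coef y).
  by apply: in_stratum_lam_of => //; rewrite -b'_eq.
move/allP: e7_strata_check => /(_ s s_gt1)/allP/(_ x x_root)/allP/(_ y y_root).
rewrite x_s y_s x_neq_y /= => /andP[/eqP Vform_iff /eqP lam_form_iff].
by rewrite b_eq b'_eq lam_form_lam_of !fmap_lam_of; split; apply: eq_iff_eqb.
Qed.
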